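(* Let $G$ be a finite solvable group with $\mathcal{I}(G)\neq G$ whose order is divisible by exactly three distinct primes. If the diameter of $\Gamma(G)$ is greater than $4$, then the prime graph $\Pi(G)$ is a path on three vertices; that is, for a suitable labeling $\{p,q,r\}$ of the prime divisors of $|G|$, the only edges of $\Pi(G)$ are $\{p,r\}$ and $\{r,q\}$.
   Context: For a finite group $G$, let $\widetilde{\Gamma}(G)$ be the graph with vertex set $G$ in which two distinct elements $x,y$ are adjacent if and only if $|\langle x,y\rangle|$ is divisible by at least three distinct primes. $\mathcal{I}(G)$ denotes the set of isolated vertices of $\widetilde{\Gamma}(G)$ and $\Gamma(G)$ is the subgraph induced on $G\setminus\mathcal{I}(G)$. The prime graph $\Pi(G)$ is the graph whose vertices are the primes dividing $|G|$, two distinct primes $p,q$ being adjacent if and only if $G$ has an element of order $pq$. *)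

From mathcomp Require Import all_boot all_fingroup all_solvable.
Set Implicit Arguments. Unset Strict Implicit. Unset Printing Implicit Defensive.
Local Open Scope group_scope.

Section Graphs.
Variable gT : finGroupType.

(* Adjacency in \widetilde{\Gamma}(G): distinct x,y with |<x,y>| divisible
   by at least three distinct primes. *)
Definition tadj : rel gT :=
  fun x y => (x != y) && (2 < size (primes #|<<[set x; y]>>|))%N.

Definition isolated (G : {set gT}) : {set gT} :=
  [set x in G | [forall y in G, ~~ tadj x y]].

Definition GammaV (G : {set gT}) : {set gT} := G :\: isolated G.

Definition Gadj (G : {set gT}) : rel gT :=
  fun x y => [&& x \in GammaV G, y \in GammaV G & tadj x y].

Definition dist_le (G : {set gT}) (k : nat) (x y : gT) : Prop :=
  exists s : seq gT, (size s <= k)%N /\ path (Gadj G) x s /\ last x s = y.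

(* diam Gamma(G) > k (distance infinite if not connected). *)
Definition diam_gt (G : {set gT}) (k : nat) : Prop :=
  exists x y, x \in GammaV G /\ y \in GammaV G /\ ~ dist_le G k x y.

Definition pi_edge (G : {set gT}) (p q : nat) : Prop :=
  [/\ p \in primes #|G|, q \in primes #|G|, p != q &
      exists2 g, g \in G & #[g] = (p * q)%N].
End Graphs.

(* If some prime, say r, is isolated in Pi(G), call the nontrivial r-elements
   and the elements of order divisible by p * q hubs.  Any two hubs are at
   distance at most 2 in Gamma(G), through an element of order r or an element
   of order divisible by p * q; the latter exists because a solvable group
   acting fixed-point-freely on a nontrivial abelian group has elements of
   order divisible by any two primes dividing its order (otherwise it would
   contain a Frobenius group acting fixed-point-freely, which an orbit-sum
   argument rules out).  Every vertex x of Gamma(G) that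
   is not a hub is a p- or q-element adjacent to some w, and an induction on
   |<x, w>| through a minimal normal subgroup and Hall subgroups yields a hub h
   with p * q * r dividing |<x, h>|.  Hence diam Gamma(G) <= 4.  If Pi(G) is a
   triangle, elements of order divisible by two of the primes serve as hubs
   and diam Gamma(G) <= 3.  The only remaining graph on three vertices is the
   path. *)

From mathcomp Require Import all_boot all_fingroup all_solvable.
From mathcomp Require Import ssralg.
Set Implicit Arguments. Unset Strict Implicit. Unset Printing Implicit Defensive.
Import GRing.Theory FiniteModule.

Local Open Scope group_scope.

(** * Fixed-point-free actions *)

Section SemiregularAction.
Variable gT : finGroupType.
Implicit Types M A K X Y : {group gT}.

Lemma semiregularP M K : reflect (semiregular M K) [forall x in K^#, 'C_M[x] == 1].
Proof. by apply: (iffP forall_inP) => regMK x Kx; [apply/eqP/regMK | rewrite regMK]. Qed.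

Lemma fmod_sum_act_eq0 M (abM : abelian M) X g (u : fmod_of abM) :
  X \subset 'N(M) -> g \in X -> 'C_M[g] = 1 -> (\sum_(x in X) u ^@ x)%R = 0%R.
Proof.
move=> nMX Xg regMg; set S := (\sum_(x in X) u ^@ x)%R.
have S_fixed : (S ^@ g)%R = S.
  rewrite /S actr_sum (reindex_inj (mulIg g^-1)) /=.
  apply: eq_big => [x | x]; first by rewrite groupMr ?groupV.
  rewrite groupMr ?groupV // => Xx.
  by rewrite -actrM ?(subsetP nMX) ?groupM ?groupV // mulgKV.
have : fmval S \in 'C_M[g].
  rewrite inE fmodP; apply/cent1P/commgP/conjg_fixP.
  by rewrite -fmvalJ ?(subsetP nMX) // S_fixed.
by rewrite regMg inE => /eqP S1; apply: fmod_inj; rewrite S1.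
Qed.

(* The sum of [u ^@ x] over the Frobenius group [A <*> Y] is computed along its
   Frobenius partition: every block sums to [0] or [- u], which forces
   [u *+ n = 0] for some [n] dividing [#|A|]. *)
Lemma Frobenius_semiregular_abelian_trivial M A Y :
    abelian M -> A <*> Y \subset 'N(M) -> Y \subset 'N(A) -> A :!=: 1 -> Y :!=: 1 ->
  semiregular A Y -> semiregular M (A <*> Y) -> M :=: 1.
Proof.
move=> abM nML nAY ntA ntY regAY regML; set L := A <*> Y.
have tiAY : A :&: Y = 1.
  apply/trivgP/subsetP=> z /setIP[Az Yz]; have [-> | ntz] := eqVneq z 1; first exact: group1.
  by rewrite -(regAY z); [rewrite inE Az cent1id | rewrite !inE ntz].
have frobL : [Frobenius L = A ><| Y].
  by apply/Frobenius_semiregularP=> //; apply: sdprodEY.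
have [/eqP coverL trivL _] := and3P (Frobenius_partition frobL).
have coMA : coprime #|M| #|A|.
  apply: regular_norm_coprime; first exact: subset_trans (joing_subl A Y) nML.
  exact: semiregularS (joing_subl A Y) regML.
apply/trivgP/subsetP=> v Mv; rewrite inE; set u := fmod abM v.
have sum_eq0 X g : X \subset L -> g \in X^# -> (\sum_(x in X) u ^@ x)%R = 0%R.
  move=> sXL Xg; apply: fmod_sum_act_eq0 (regML g _); first exact: subset_trans sXL nML.
    by case/setD1P: Xg.
  by move: Xg; rewrite !inE => /andP[-> /(subsetP sXL)].
have sum_compl a : a \in A -> (\sum_(x in Y^# :^ a) u ^@ x)%R = (- u)%R.
  move=> Aa; have sYaL : Y :^ a \subset L.
    by rewrite sub_conjg conjGid ?groupV ?joing_subr ?(subsetP (joing_subl A Y)).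
  have [y Yy nty] := trivgPn _ ntY.
  have := sum_eq0 _ (y ^ a) sYaL; rewrite -conjD1g memJ_conjg !inE nty Yy => /(_ isT).
  rewrite conjD1g (big_setD1 1) ?group1 //= actr1 => /eqP.
  by rewrite addrC addr_eq0 => /eqP.
have A_notin : gval A \notin Y^# :^: A.
  by apply/imsetP=> -[a _ defA]; move: (group1 A); rewrite defA conjD1g !inE eqxx.
have [a Aa nta] := trivgPn _ ntA.
have := sum_eq0 L a (subxx L); rewrite !inE nta (subsetP (joing_subl A Y)) //.
rewrite -coverL big_trivIset // big_setU1 //= (sum_eq0 A a) ?joing_subl ?inE ?nta // add0r.
rewrite (eq_bigr (fun=> - u)%R); last by move=> _ /imsetP[b Ab ->]; apply: sum_compl.
move=> /(_ isT)/eqP; rewrite sumr_const mulNrn oppr_eq0 => /eqP un0.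
have := congr1 fmval un0; rewrite fmvalZ fmval0 fmodK // => /eqP.
rewrite -order_dvdn => v_dvd.
have : #[v] %| gcdn #|M| #|A|.
  rewrite dvdn_gcd order_dvdG //; apply: dvdn_trans v_dvd _.
  by rewrite card_conjugates dvdn_indexg.
by rewrite (eqP coMA) dvdn1 order_eq1.
Qed.
End SemiregularAction.

Section SemiregularElements.
Variable gT : finGroupType.
Implicit Types G M A K H : {group gT}.

Lemma prime_dvd_Hall pi G K t :
  pi.-Hall(G) K -> prime t -> t \in pi -> t %| #|G| -> t %| #|K|.
Proof.
move=> hallK t_pr pi_t tG; rewrite (card_Hall hallK) -(part_pnat_id (_ : pi.-nat t)).
  by rewrite partn_dvd.
by rewrite pnatE.
Qed.

Lemma prime_dvd_nontrivial G p : prime p -> p %| #|G| -> G :!=: 1.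
Proof. by move=> p_pr pG; rewrite -cardG_gt1 (leq_trans (prime_gt1 p_pr)) // dvdn_leq. Qed.

Lemma order_dvd_pelt (p : nat) (x : gT) : p.-elt x -> x != 1 -> p %| #[x].
Proof. by move=> px ntx; rewrite -(pdiv_p_elt px ntx) pdiv_dvd. Qed.

Lemma prime_dvd_order_neq1 (p : nat) (x : gT) : prime p -> p %| #[x] -> x != 1.
Proof. by move=> p_pr; apply: contraTneq => ->; rewrite order1 dvdn1; case: eqP p_pr => // ->. Qed.

Lemma semiregular_commute M K (x m : gT) :
  semiregular M K -> x \in K -> x != 1 -> m \in M -> commute x m -> m = 1.
Proof.
move=> regMK Kx ntx Mm cxm; apply/set1gP; rewrite -(regMK x); last by rewrite !inE ntx.
by rewrite inE Mm; apply/cent1P/commute_sym.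
Qed.

Lemma semiregular_elt_dvd2_normal M K A (s t : nat) :
    abelian M -> M :!=: 1 -> K \subset 'N(M) -> semiregular M K ->
    A <| K -> A :!=: 1 -> s.-group A -> prime t -> t %| #|K| -> s != t ->
  exists2 x, x \in K & (s %| #[x]) && (t %| #[x]).
Proof.
move=> abM ntM nMK regMK /andP[sAK nAK] ntA sA t_pr tK neq_st.
have [y Ky oy] := Cauchy t_pr tK.
have tY : t.-group <[y]> by rewrite /pgroup -orderE oy pnat_id.
have sYK : <[y]> \subset K by rewrite cycle_subG.
have [/semiregularP regAY | ] := boolP [forall z in <[y]>^#, 'C_A[z] == 1].
  case/negP: ntM; apply/eqP/(Frobenius_semiregular_abelian_trivial abM _ _ _ _ regAY) => //.
  - by apply: subset_trans nMK; rewrite join_subG sAK.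
  - exact: subset_trans sYK nAK.
  - by rewrite cycle_eq1 -order_gt1 oy prime_gt1.
  - by apply: semiregularS regMK; rewrite // join_subG sAK.
rewrite negb_forall_in => /exists_inP[z /setD1P[ntz Yz] /trivgPn[e /setIP[Ae cez] nte]].
have se : s.-elt e := mem_p_elt sA Ae.
have tz : t.-elt z := mem_p_elt tY Yz.
exists (e * z); first by rewrite groupM ?(subsetP sAK e Ae) ?(subsetP sYK z Yz).
have co_ez : coprime #[e] #[z].
  by apply: (pnat_coprime se); apply: sub_p_elt tz => k; rewrite !inE => /eqP->; rewrite eq_sym.
rewrite orderM //; last exact/cent1P.
by rewrite dvdn_mulr ?dvdn_mull ?order_dvd_pelt.
Qed.

Lemma solvable_abelian_normal_pgroup pi G : solvable G -> G :!=: 1 -> pi.-group G ->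
  exists s, exists2 M : {group gT}, M <| G & [/\ s \in pi, M :!=: 1, s.-group M & abelian M].
Proof.
move=> solG ntG piG; have [M [sMG nsMG ntM]] := solvable_norm_abelem solG (normal_refl G) ntG.
case/is_abelemP=> s s_pr /and3P[sM abM _]; exists s, M => //; split=> //.
have [_ sM' _] := pgroup_pdiv sM ntM.
exact: (pgroupP piG) s s_pr (dvdn_trans sM' (cardSg sMG)).
Qed.

Lemma semiregular_elt_dvd2 M K a b :
    abelian M -> M :!=: 1 -> K \subset 'N(M) -> semiregular M K -> solvable K ->
    prime a -> prime b -> a != b -> a %| #|K| -> b %| #|K| ->
  exists2 x, x \in K & (a %| #[x]) && (b %| #[x]).
Proof.
move=> abM ntM nMK regMK solK a_pr b_pr neq_ab aK bK.
have [H hallH] := Hall_exists [pred k | k \in [:: a; b]] solK.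
have [sHK abH _] := and3P hallH.
have aH : a %| #|H| by apply: prime_dvd_Hall hallH _ _ aK; rewrite ?inE ?eqxx.
have bH : b %| #|H| by apply: prime_dvd_Hall hallH _ _ bK; rewrite ?inE ?eqxx ?orbT.
have [s [A nsAH [ab_s ntA sA _]]] :=
  solvable_abelian_normal_pgroup (solvableS sHK solK) (prime_dvd_nontrivial a_pr aH) abH.
have nMH := subset_trans sHK nMK; have regMH := semiregularS (subxx M) sHK regMK.
move: ab_s; rewrite !inE => ab_s.
have [x Hx ab_x] : exists2 x, x \in H & (a %| #[x]) && (b %| #[x]).
  case/orP: ab_s => /eqP es; subst s.
    exact: semiregular_elt_dvd2_normal abM ntM nMH regMH nsAH ntA sA b_pr bH neq_ab.
  rewrite eq_sym in neq_ab.
  have [x Hx ba_x] := semiregular_elt_dvd2_normal abM ntM nMH regMH nsAH ntA sA a_pr aH neq_ab.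
  by exists x; rewrite // andbC.
by exists x; first exact: (subsetP sHK).
Qed.
End SemiregularElements.

(** * Primes isolated in the prime graph *)

Section IsolatedPrime.
Variable gT : finGroupType.
Implicit Types H M K : {group gT}.

Definition prime_isolated (r : nat) (A : {set gT}) :=
  {in A, forall x, r %| #[x] -> r.-elt x}.

Lemma prime_isolated_dvd (r s : nat) A x : prime_isolated r A -> x \in A ->
  r %| #[x] -> prime s -> s %| #[x] -> s = r.
Proof.
move=> isoA Ax rx s_pr sx.
by have := pnat_dvd sx (isoA x Ax rx); rewrite pnatE // inE => /eqP.
Qed.

Lemma prime_isolated_semiregular (r : nat) H M K : prime r -> prime_isolated r H ->
  M \subset H -> K \subset H -> r.-group M -> r^'.-group K -> semiregular M K.
Proof.
move=> r_pr isoH sMH sKH rM r'K x /setD1P[ntx Kx].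
apply/trivgP/subsetP=> m /setIP[Mm cxm]; rewrite inE; apply/eqP.
apply: contraTeq ntx => ntm; rewrite negbK.
have r'x := mem_p_elt r'K Kx; have rm := mem_p_elt rM Mm.
have oxm : #[x * m] = (#[x] * #[m])%N.
  by rewrite orderM ?(pnat_coprime r'x) ?pnatNK //; apply/commute_sym/cent1P.
have rxm : r.-elt (x * m).
  apply: isoH; first by rewrite groupM ?(subsetP sKH x Kx) ?(subsetP sMH m Mm).
  by rewrite oxm dvdn_mull ?order_dvd_pelt.
by rewrite -order_eq1 (pnat_1 (pnat_dvd _ rxm) r'x) // oxm dvdn_mulr.
Qed.

Lemma prime_isolated_cent1 (r : nat) H M (y : gT) : prime r -> prime_isolated r H ->
  M \subset H -> r^'.-group M -> y \in H -> r.-elt y -> y != 1 -> 'C_M[y] = 1.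
Proof.
move=> r_pr isoH sMH r'M Hy ry nty.
have sYH : <[y]> \subset H by rewrite cycle_subG.
have rY : r.-group <[y]> by rewrite /pgroup -orderE.
have regYM := prime_isolated_semiregular r_pr isoH sYH sMH rY r'M.
by apply: (semiregular_sym regYM); rewrite !inE nty cycle_id.
Qed.
End IsolatedPrime.

Lemma prime_isolated_quotient (gT : finGroupType) (r : nat) (H M : {group gT}) :
  prime_isolated r H -> prime_isolated r (H / M).
Proof.
move=> isoH _ /morphimP[x Nx Hx ->] rx; apply: morph_p_elt => //.
by apply: isoH => //; apply: dvdn_trans rx (morph_order _ Nx).
Qed.

Section IsolatedPrimeEdge.
Variables p q r : nat.
Hypotheses (p_pr : prime p) (q_pr : prime q) (r_pr : prime r).
Hypotheses (neq_pq : p != q) (neq_qr : q != r) (neq_pr : p != r).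
Variables (gT : finGroupType) (G : {group gT}).
Hypotheses (solG : solvable G) (piG : [pred k | k \in [:: p; q; r]].-group G).
Hypotheses (qG : q %| #|G|) (rG : r %| #|G|) (isoG : prime_isolated r G).

Lemma normal_pgroup_isolated_edge (M : {group gT}) :
    M <| G -> M :!=: 1 -> p.-group M -> abelian M ->
  exists2 c, c \in G & (p %| #[c]) && (q %| #[c]).
Proof.
move=> /andP[sMG nMG] ntM pM abM.
have [K hallK] := Hall_exists p^' solG; have [sKG p'K _] := and3P hallK.
have [/semiregularP regMK | ] := boolP [forall x in K^#, 'C_M[x] == 1].
  have [x Kx /andP[qx rx]] : exists2 x, x \in K & (q %| #[x]) && (r %| #[x]).
    apply: (semiregular_elt_dvd2 abM ntM (subset_trans sKG nMG) regMK (solvableS sKG solG)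
      q_pr r_pr neq_qr);
    by apply: prime_dvd_Hall hallK _ _ _; rewrite // !inE eq_sym.
  by case/eqP: neq_qr; apply: prime_isolated_dvd isoG (subsetP sKG x Kx) rx q_pr qx.
rewrite negb_forall_in => /exists_inP[x /setD1P[ntx Kx] /trivgPn[m /setIP[Mm cxm] ntm]].
have Gx := subsetP sKG x Kx; have p'x := mem_p_elt p'K Kx; have pm := mem_p_elt pM Mm.
have oxm : #[x * m] = (#[x] * #[m])%N.
  by rewrite orderM ?(pnat_coprime p'x) ?pnatNK //; apply/commute_sym/cent1P.
have pxm : p %| #[x * m] by rewrite oxm dvdn_mull ?order_dvd_pelt.
have t_pr : prime (pdiv #[x]) by rewrite pdiv_prime ?order_gt1.
have tx : pdiv #[x] %| #[x] := pdiv_dvd _.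
have : pdiv #[x] \in [:: p; q; r].
  by apply: (pgroupP piG) (dvdn_trans tx (order_dvdG Gx)).
rewrite !inE => /or3P[] /eqP et.
- by have := pnat_dvd tx p'x; rewrite pnatE // !inE et eqxx.
- exists (x * m); first by rewrite groupM ?(subsetP sMG m Mm).
  by rewrite pxm oxm dvdn_mulr // -et.
have Gxm : x * m \in G by rewrite groupM ?(subsetP sMG m Mm).
have rxm : r %| #[x * m] by rewrite oxm dvdn_mulr // -et.
by case/eqP: neq_pr; apply: prime_isolated_dvd isoG Gxm rxm p_pr pxm.
Qed.
End IsolatedPrimeEdge.

Lemma prime_isolated_edge (gT : finGroupType) (G : {group gT}) (p q r : nat) :
    prime p -> prime q -> prime r -> p != q -> q != r -> p != r ->
    solvable G -> [pred k | k \in [:: p; q; r]].-group G ->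
    p %| #|G| -> q %| #|G| -> r %| #|G| -> prime_isolated r G ->
  exists2 c, c \in G & (p %| #[c]) && (q %| #[c]).
Proof.
move=> p_pr q_pr r_pr neq_pq neq_qr neq_pr solG piG pG qG rG isoG.
have [s [M nsMG [pqr_s ntM sM abM]]] :=
  solvable_abelian_normal_pgroup solG (prime_dvd_nontrivial p_pr pG) piG.
move: pqr_s; rewrite !inE => /or3P[] /eqP es; subst s.
- exact: (normal_pgroup_isolated_edge p_pr q_pr r_pr neq_pq neq_qr neq_pr
    solG piG qG rG isoG nsMG ntM sM abM).
- have piG' : [pred k | k \in [:: q; p; r]].-group G.
    by apply: sub_pgroup piG => k; rewrite !inE => /or3P[] ->; rewrite ?orbT.
  rewrite eq_sym in neq_pq.
  have [c Gc] := normal_pgroup_isolated_edge q_pr p_pr r_pr neq_pq neq_pr neq_qr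
    solG piG' pG rG isoG nsMG ntM sM abM.
  by rewrite andbC; exists c.
have [K hallK] := Hall_exists r^' solG; have [sKG r'K _] := and3P hallK.
have regMK := prime_isolated_semiregular r_pr isoG (normal_sub nsMG) sKG sM r'K.
have [c Kc pqc] : exists2 c, c \in K & (p %| #[c]) && (q %| #[c]).
  apply: (semiregular_elt_dvd2 abM ntM (subset_trans sKG (normal_norm nsMG)) regMK
    (solvableS sKG solG) p_pr q_pr neq_pq);
  by apply: prime_dvd_Hall hallK _ _ _; rewrite // !inE.
by exists c; first exact: (subsetP sKG).
Qed.

(** * Hubs in two-generated subgroups *)

Section ComplementConjugation.
Variable gT : finGroupType.
Implicit Types H M K N : {group gT}.

Lemma Hall_exists_mem pi H (u : gT) : solvable H -> u \in H -> pi.-elt u ->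
  exists2 K : {group gT}, pi.-Hall(H) K & u \in K.
Proof.
move=> solH Hu pi_u; have [K hallK] := Hall_exists pi solH.
have sUH : <[u]> \subset H by rewrite cycle_subG.
have [g Hg sUgK] := Hall_Jsub solH hallK sUH pi_u.
exists (K :^ g^-1)%G; first by rewrite pHallJ ?groupV.
by rewrite mem_conjgV (subsetP sUgK) ?memJ_conjg ?cycle_id.
Qed.

Lemma card_gen2_dvd N (u w : gT) : u \in N -> w \in 'N(N) ->
  #|<<[set u; w]>>| %| #|N| * #[w].
Proof.
move=> Nu nNw; have nNW : <[w]> \subset 'N(N) by rewrite cycle_subG.
have sUW : <<[set u; w]>> \subset N <*> <[w]>.
  rewrite gen_subG; apply/subsetP=> x /set2P[]->; first exact: (subsetP (joing_subl N _)).
  by rewrite (subsetP (joing_subr N _)) ?cycle_id.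
apply: dvdn_trans (cardSg sUW) _; rewrite /= (norm_joinEr nNW) orderE mul_cardG.
exact: dvdn_mulr.
Qed.

Lemma complement_conj_commute M K (x m : gT) : K \subset 'N(M) -> M :&: K = 1 ->
  x \in K -> m \in M -> x ^ m \in K -> commute x m.
Proof.
move=> nMK tiMK Kx Mm Kxm; apply/commgP/eqP/set1gP; rewrite -tiMK inE.
rewrite {1}commgEr groupMr // memJ_norm ?groupV ?(subsetP nMK) //=.
by rewrite Mm commgEl groupMl ?groupV.
Qed.

(* Conjugating [<<[set u; k ^ m]>>] into [K] inside [M <*> K] can only be done by
   an element of [M], which must then be [m^-1] since [k] acts regularly on [M]. *)
Lemma Hall_gen2_conj_commute (s : nat) H M K (u k m : gT) :
    solvable H -> M <| H -> s.-group M -> s^'.-Hall(H) K ->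
    u \in K -> k \in K -> 'C_M[k] = 1 -> m \in M ->
    s^'.-group <<[set u; k ^ m]>> ->
  commute u m.
Proof.
move=> solH /andP[sMH nMH] sM hallK Ku Kk regMk Mm s'X.
have [sKH s'K _] := and3P hallK; have nMK := subset_trans sKH nMH.
have tiMK : M :&: K = 1 by rewrite coprime_TIg ?(pnat_coprime sM).
have sLH : M <*> K \subset H by rewrite join_subG sMH.
have hallKL := pHall_subl (joing_subr M K) sLH hallK.
have sXL : <<[set u; k ^ m]>> \subset M <*> K.
  have [sKL sML] := (subsetP (joing_subr M K), subsetP (joing_subl M K)).
  by rewrite gen_subG; apply/subsetP=> x /set2P[]->; rewrite ?groupJ ?(sKL u) ?(sKL k) ?(sML m).
have [g] := Hall_Jsub (solvableS sLH solH) hallKL sXL s'X.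
rewrite /= norm_joinEr // => /mulsgP[m0 k0 Mm0 Kk0 ->].
rewrite conjsgM sub_conjg conjGid ?groupV // => sXK.
have conjK x : x \in <<[set u; k ^ m]>> -> x ^ m0 \in K.
  by move=> Xx; rewrite (subsetP sXK) ?memJ_conjg.
have Kkm : k ^ (m * m0) \in K by rewrite conjgM conjK ?mem_gen ?setU11 ?setU1r ?set11.
have : m * m0 \in 'C_M[k].
  rewrite inE groupM //; apply/cent1P/commute_sym.
  exact: (complement_conj_commute nMK tiMK Kk (groupM Mm Mm0) Kkm).
rewrite regMk inE -eq_invg_mul => /eqP m0E.
rewrite -(invgK m); apply/commuteV/(complement_conj_commute nMK tiMK); rewrite ?groupV //.
by rewrite m0E conjK ?mem_gen ?setU11.
Qed.
End ComplementConjugation.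

Section TwoGenerated.
Variable gT : finGroupType.
Implicit Types x y : gT.

Lemma order_dvd_gen2l x y : #[x] %| #|<<[set x; y]>>|.
Proof. by rewrite order_dvdG ?mem_gen ?setU11. Qed.

Lemma order_dvd_gen2r x y : #[y] %| #|<<[set x; y]>>|.
Proof. by rewrite order_dvdG ?mem_gen // !inE eqxx orbT. Qed.

Lemma gen2_subG (G : {group gT}) x y : x \in G -> y \in G -> <<[set x; y]>> \subset G.
Proof. by move=> Gx Gy; rewrite gen_subG; apply/subsetP=> z /set2P[]->. Qed.

Lemma quotient_gen2 (M : {group gT}) x y : x \in 'N(M) -> y \in 'N(M) ->
  <<[set x; y]>> / M = <<[set coset M x; coset M y]>>.
Proof.
move=> Nx Ny; rewrite quotient_gen ?quotientU ?quotient_set1 //.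
by apply/subsetP=> z /set2P[]->.
Qed.

Definition gen2_dvd3 (p q r : nat) x y :=
  [&& p %| #|<<[set x; y]>>|, q %| #|<<[set x; y]>>| & r %| #|<<[set x; y]>>|].

Definition hub (p q r : nat) (h : gT) := r.-elt h && (h != 1) || (p %| #[h]) && (q %| #[h]).

Lemma hubC (p q r : nat) h : hub p q r h = hub q p r h.
Proof. by rewrite /hub [(p %| _) && _]andbC. Qed.
End TwoGenerated.

Section HubGen2.
Variables p q r : nat.
Hypotheses (p_pr : prime p) (q_pr : prime q) (r_pr : prime r).
Hypotheses (neq_pq : p != q) (neq_qr : q != r) (neq_pr : p != r).

Section NormalSubgroup.
Variables (gT : finGroupType) (H M : {group gT}) (u w : gT).
Hypotheses (defH : H :=: <<[set u; w]>>) (solH : solvable H) (isoH : prime_isolated r H).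
Hypotheses (p_u : p.-elt u) (ntu : u != 1) (nsMH : M <| H) (ntM : M :!=: 1).

Let Hu : u \in H. Proof. by rewrite defH mem_gen ?setU11. Qed.
Let Hw : w \in H. Proof. by rewrite defH mem_gen // !inE eqxx orbT. Qed.
Let sMH : M \subset H. Proof. by case/andP: nsMH. Qed.
Let nMH : H \subset 'N(M). Proof. by case/andP: nsMH. Qed.

Lemma hub_gen2_normal_rgroup : r.-group M -> abelian M -> p %| #|H| -> q %| #|H| ->
  exists2 h, h \in H & hub p q r h && gen2_dvd3 p q r u h.
Proof.
move=> rM abM pH qH.
have r'u : r^'.-elt u by apply: sub_p_elt p_u => k; rewrite !inE => /eqP->.
have [K hallK Ku] := Hall_exists_mem solH Hu r'u; have [sKH r'K _] := and3P hallK.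
have regMK := prime_isolated_semiregular r_pr isoH sMH sKH rM r'K.
have [c Kc /andP[pc qc]] : exists2 c, c \in K & (p %| #[c]) && (q %| #[c]).
  apply: (semiregular_elt_dvd2 abM ntM (subset_trans sKH nMH) regMK (solvableS sKH solH)
    p_pr q_pr neq_pq);
  by apply: prime_dvd_Hall hallK _ _ _; rewrite // !inE.
have [m Mm ntm] := trivgPn _ ntM.
exists (c ^ m); first by rewrite groupJ ?(subsetP sKH c Kc) ?(subsetP sMH m Mm).
rewrite /hub /gen2_dvd3 orderJ pc qc orbT /=.
rewrite (dvdn_trans (order_dvd_pelt p_u ntu)) ?order_dvd_gen2l //=.
rewrite (dvdn_trans _ (order_dvd_gen2r _ _)) ?orderJ //=.
apply: contraT => r'X; case/eqP: ntm.
apply: (semiregular_commute regMK Ku ntu Mm).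
apply: (Hall_gen2_conj_commute solH nsMH rM hallK Ku Kc _ Mm); last by rewrite /pgroup p'natE.
by apply: regMK; rewrite !inE Kc (prime_dvd_order_neq1 p_pr pc).
Qed.

Lemma hub_gen2_normal_qgroup : q.-group M -> r %| #|H| -> ~~ (r %| #[w]) ->
  exists2 h, h \in H & hub p q r h && gen2_dvd3 p q r u h.
Proof.
move=> qM rH r'w.
have r'M : r^'.-group M by apply: sub_pgroup qM => k; rewrite !inE => /eqP->.
have [cMu | ] := boolP (u \in 'C(M)).
  (* [C] is an [r']-group containing [u] and normalised by [w], so [r %| #|H|]
     would force [r %| #[w]]. *)
  case/negP: r'w; set C := 'C_H(M).
  have r'C : ~~ (r %| #|C|).
    apply/negP=> /(Cauchy r_pr)[y /setIP[Hy cMy] oy]; case/negP: ntM.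
    have ry : r.-elt y by rewrite /p_elt oy pnat_id.
    have nty : y != 1 by rewrite -order_gt1 oy prime_gt1.
    have := prime_isolated_cent1 r_pr isoH sMH r'M Hy ry nty.
    by rewrite (setIidPl _) ?sub_cent1 // => ->.
  have nCw : w \in 'N(C) by rewrite (subsetP _ w Hw) // normsI ?normG ?norms_cent.
  have Cu : u \in C by rewrite inE Hu.
  have := card_gen2_dvd Cu nCw; rewrite -defH => /(dvdn_trans rH).
  by rewrite Euclid_dvdM // (negPf r'C).
rewrite -sub_cent1 => /subsetPn[m Mm not_cum].
have q'u : q^'.-elt u by apply: sub_p_elt p_u => k; rewrite !inE => /eqP->.
have [K hallK Ku] := Hall_exists_mem solH Hu q'u; have [sKH q'K _] := and3P hallK.
have rK : r %| #|K| by apply: prime_dvd_Hall hallK _ _ _; rewrite // !inE eq_sym.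
have [y Ky oy] := Cauchy r_pr rK.
have ry : r.-elt y by rewrite /p_elt oy pnat_id.
have nty : y != 1 by rewrite -order_gt1 oy prime_gt1.
have Hy := subsetP sKH y Ky.
exists (y ^ m); first by rewrite groupJ ?(subsetP sMH m Mm).
rewrite /hub /gen2_dvd3 /p_elt orderJ oy pnat_id // conjg_eq1 nty /=.
rewrite (dvdn_trans (order_dvd_pelt p_u ntu)) ?order_dvd_gen2l //=.
rewrite [r %| _](dvdn_trans _ (order_dvd_gen2r u (y ^ m))) ?orderJ ?oy // andbT.
apply: contraT => q'X; case/negP: not_cum; apply/cent1P/commute_sym.
apply: (Hall_gen2_conj_commute solH nsMH qM hallK Ku Ky _ Mm); last by rewrite /pgroup p'natE.
exact: prime_isolated_cent1 r_pr isoH sMH r'M Hy ry nty.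
Qed.
End NormalSubgroup.

Lemma hub_quotient (gT : finGroupType) (H M : {group gT}) h :
  prime_isolated r H -> h \in H -> h \in 'N(M) -> hub p q r (coset M h) -> hub p q r h.
Proof.
move=> isoH Hh Nh /orP[/andP[rhM nthM] | /andP[phM qhM]]; last first.
  by rewrite /hub (dvdn_trans phM (morph_order _ Nh)) (dvdn_trans qhM (morph_order _ Nh)) orbT.
have rh : r %| #[h] := dvdn_trans (order_dvd_pelt rhM nthM) (morph_order _ Nh).
by rewrite /hub isoH //= (prime_dvd_order_neq1 r_pr rh).
Qed.

Lemma hub_gen2_quotient (gT : finGroupType) (H M : {group gT}) (u : gT) :
    prime_isolated r H -> u \in 'N(M) ->
    (exists2 hM, hM \in H / M & hub p q r hM && gen2_dvd3 p q r (coset M u) hM) ->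
  exists2 h, h \in H & hub p q r h && gen2_dvd3 p q r u h.
Proof.
move=> isoH Nu [_ /morphimP[h Nh Hh ->] /andP[hub_hM dvd_hM]].
exists h; rewrite // (hub_quotient isoH Hh Nh hub_hM) /=.
move: dvd_hM; rewrite /gen2_dvd3 -quotient_gen2 //.
have dvd_lift k : k %| #|<<[set u; h]>> / M| -> k %| #|<<[set u; h]>>|.
  by move/dvdn_trans; apply; apply: dvdn_quotient.
by case/and3P=> /dvd_lift-> /dvd_lift-> /dvd_lift->.
Qed.

(* By induction on [#|H|]: a minimal normal subgroup [M] of [H] is a [p]-, [q]-
   or [r]-group, and only when it is a [p]-group do we pass to [H / M]. *)
Lemma exists_hub_gen2 (gT : finGroupType) (H : {group gT}) (u w : gT) :
    H :=: <<[set u; w]>> -> solvable H -> [pred k | k \in [:: p; q; r]].-group H ->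
    p %| #|H| -> q %| #|H| -> r %| #|H| -> prime_isolated r H -> p.-elt u ->
  exists2 h, h \in H & hub p q r h && gen2_dvd3 p q r u h.
Proof.
have [n] := ubnP #|H|; elim: n => // n IHn in gT H u w *; rewrite ltnS => leHn.
move=> defH solH piH pH qH rH isoH p_u.
have Hu : u \in H by rewrite defH mem_gen ?setU11.
have Hw : w \in H by rewrite defH mem_gen // !inE eqxx orbT.
have [hub_w | not_hub_w] := boolP (hub p q r w).
  by exists w; rewrite // hub_w /gen2_dvd3 -defH pH qH rH.
have r'w : ~~ (r %| #[w]).
  by apply: contra not_hub_w => rw; rewrite /hub isoH ?(prime_dvd_order_neq1 r_pr rw).
have ntu : u != 1.
  apply: contraNneq r'w => u1; apply: dvdn_trans rH _.
  by rewrite defH u1 orderE cardSg ?gen2_subG ?group1 ?cycle_id.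
have [s [M nsMH [pqr_s ntM sM abM]]] :=
  solvable_abelian_normal_pgroup solH (prime_dvd_nontrivial p_pr pH) piH.
move: pqr_s; rewrite !inE => /or3P[] /eqP es; subst s; last first.
- exact: hub_gen2_normal_rgroup defH solH isoH p_u ntu nsMH ntM sM abM pH qH.
- exact: hub_gen2_normal_qgroup defH solH isoH p_u ntu nsMH ntM sM rH r'w.
have [sMH nMH] := andP nsMH; have [Nu Nw] := (subsetP nMH u Hu, subsetP nMH w Hw).
have [Mu | M'u] := boolP (u \in M).
  have := card_gen2_dvd Mu Nw; rewrite -defH => /(dvdn_trans rH).
  rewrite Euclid_dvdM // (negPf r'w) orbF => /(pgroupP sM r r_pr).
  by rewrite inE eq_sym (negPf neq_pr).
have quo_dvd k : prime k -> p != k -> k %| #|H| -> k %| #|H / M|.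
  move=> k_pr neq_pk; rewrite -(Lagrange sMH) -card_quotient // Euclid_dvdM //.
  by case/orP=> // /(pgroupP sM k k_pr); rewrite inE eq_sym (negPf neq_pk).
have p_uM : p.-elt (coset M u) := morph_p_elt _ Nu p_u.
have ntuM : coset M u != 1 by apply: contra M'u => /eqP/coset_idr->.
apply: (hub_gen2_quotient isoH Nu); apply: (IHn _ (H / M)%G (coset M u) (coset M w)).
- exact: leq_trans (ltn_quotient ntM sMH) leHn.
- by rewrite /= defH quotient_gen2.
- exact: quotient_sol.
- exact: quotient_pgroup.
- exact: dvdn_trans (order_dvd_pelt p_uM ntuM) (order_dvdG (mem_quotient M Hu)).
- exact: quo_dvd.
- exact: quo_dvd.
- exact: prime_isolated_quotient.
- exact: p_uM.
Qed.
End HubGen2.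

(** * Distances in Gamma(G) *)

Section Distance.
Variables (gT : finGroupType) (G : {group gT}).
Implicit Types x y z : gT.

Lemma tadj_sym x y : tadj x y = tadj y x.
Proof. by rewrite /tadj eq_sym setUC. Qed.

Lemma GammaV_sub : GammaV G \subset G.
Proof. exact: subsetDl. Qed.

Lemma GammaV_neighbour x : x \in GammaV G -> exists2 w, w \in G & tadj x w.
Proof.
rewrite !inE => /andP[+ Gx]; rewrite Gx => /forall_inPn[w Gw].
by rewrite negbK; exists w.
Qed.

Lemma tadj_Gadj x y : x \in G -> y \in G -> tadj x y -> Gadj G x y.
Proof.
move=> Gx Gy xy; rewrite /Gadj xy !inE Gx Gy !andbT /=.
by apply/andP; split; apply/forall_inPn; [exists y | exists x]; rewrite // negbK // tadj_sym.
Qed.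

Lemma Gadj_sym x y : Gadj G x y = Gadj G y x.
Proof. by rewrite /Gadj andbCA tadj_sym. Qed.

Lemma dist_le_refl k x : dist_le G k x x.
Proof. by exists [::]. Qed.

Lemma Gadj_dist_le1 x y : Gadj G x y -> dist_le G 1 x y.
Proof. by move=> xy; exists [:: y]; rewrite /= xy. Qed.

Lemma dist_le_trans m n x y z :
  dist_le G m x y -> dist_le G n y z -> dist_le G (m + n) x z.
Proof.
move=> [s [le_s [xs ys]]] [t [le_t [yt zt]]]; exists (s ++ t).
by rewrite size_cat leq_add // cat_path last_cat xs ys yt.
Qed.

Lemma dist_leW m n x y : m <= n -> dist_le G m x y -> dist_le G n x y.
Proof. by move=> le_mn [s [le_s xys]]; exists s; rewrite (leq_trans le_s). Qed.

Lemma dist_le_sym k x y : dist_le G k x y -> dist_le G k y x.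
Proof.
case=> s [le_s [xs <-]]; exists (rev (belast x s)).
rewrite size_rev size_belast rev_path (eq_path (e' := Gadj G)) //.
  by split=> //; split=> //; case: s {le_s xs} => //= z s; rewrite rev_cons last_rcons.
by move=> u v; rewrite Gadj_sym.
Qed.
End Distance.

Definition pi_edgeb (gT : finGroupType) (G : {set gT}) (a b : nat) :=
  [exists g in G, (a %| #[g]) && (b %| #[g])].

Lemma pi_edgebC (gT : finGroupType) (G : {set gT}) (a b : nat) :
  pi_edgeb G a b = pi_edgeb G b a.
Proof. by apply: eq_existsb => g; rewrite [(a %| _) && _]andbC. Qed.

Section ThreePrimes.
Variables (gT : finGroupType) (G : {group gT}) (p q r : nat).
Hypothesis primesG : perm_eq (primes #|G|) [:: p; q; r].

Let mem_primesG k : (k \in [:: p; q; r]) = prime k && (k %| #|G|).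
Proof. by rewrite -(perm_mem primesG) mem_primes cardG_gt0. Qed.

Let p_pr : prime p. Proof. by have := mem_primesG p; rewrite !inE eqxx => /esym/andP[]. Qed.
Let q_pr : prime q. Proof. by have := mem_primesG q; rewrite !inE eqxx orbT => /esym/andP[]. Qed.
Let r_pr : prime r. Proof. by have := mem_primesG r; rewrite !inE eqxx !orbT => /esym/andP[]. Qed.

Let uniq_pqr : uniq [:: p; q; r].
Proof. by rewrite -(perm_uniq primesG) primes_uniq. Qed.

Let pG : p %| #|G|. Proof. by have := mem_primesG p; rewrite !inE eqxx => /esym/andP[]. Qed.
Let qG : q %| #|G|. Proof. by have := mem_primesG q; rewrite !inE eqxx orbT => /esym/andP[]. Qed.
Let rG : r %| #|G|. Proof. by have := mem_primesG r; rewrite !inE eqxx !orbT => /esym/andP[]. Qed.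

Let pqr_neq : [/\ p != q, q != r & p != r].
Proof. by move: uniq_pqr; rewrite /= !inE !negb_or => /and3P[/andP[-> ->] -> _]. Qed.

Let piG : [pred k | k \in [:: p; q; r]].-group G.
Proof. by apply/pgroupP=> k k_pr kG; rewrite [_ \in _]mem_primesG k_pr. Qed.

Lemma tadj_gen2_dvd3 x y : x \in G -> y \in G -> tadj x y = (x != y) && gen2_dvd3 p q r x y.
Proof.
move=> Gx Gy; rewrite /tadj; congr (_ && _); set n := #|<<[set x; y]>>|.
have sub_pqr : {subset primes n <= [:: p; q; r]}.
  move=> k; rewrite mem_primesG mem_primes => /and3P[-> _ kn].
  exact: dvdn_trans kn (cardSg (gen2_subG Gx Gy)).
apply/idP/and3P=> [gt2 | [pn qn rn]].
  have [_ eq_pqr] := uniq_min_size (primes_uniq n) sub_pqr gt2.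
  have dvd_n k : k \in [:: p; q; r] -> k %| n by rewrite -eq_pqr mem_primes => /and3P[].
  by rewrite !dvd_n // !inE eqxx ?orbT.
apply: (uniq_leq_size uniq_pqr) => k; rewrite mem_primes cardG_gt0 !inE.
by case/or3P=> /eqP->; rewrite ?pn ?qn ?rn ?p_pr ?q_pr ?r_pr.
Qed.

Lemma dist_le1_gen2 x y : x \in G -> y \in G -> gen2_dvd3 p q r x y -> dist_le G 1 x y.
Proof.
move=> Gx Gy dvd_xy; have [-> | neq_xy] := eqVneq x y; first exact: dist_le_refl.
by apply/Gadj_dist_le1/tadj_Gadj; rewrite // tadj_gen2_dvd3 // neq_xy.
Qed.

Lemma dist_le1_cover x y : x \in G -> y \in G ->
  all (fun k => (k %| #[x]) || (k %| #[y])) [:: p; q; r] -> dist_le G 1 x y.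
Proof.
move=> Gx Gy cover; apply: dist_le1_gen2 => //.
have dvd k : (k %| #[x]) || (k %| #[y]) -> k %| #|<<[set x; y]>>|.
  by case/orP=> /dvdn_trans->; rewrite ?order_dvd_gen2l ?order_dvd_gen2r.
by rewrite /gen2_dvd3; case/and4P: cover => /dvd-> /dvd-> /dvd->.
Qed.

Lemma pqr_elt_dist_le2 g x y : g \in G -> [&& p %| #[g], q %| #[g] & r %| #[g]] ->
  x \in G -> y \in G -> dist_le G 2 x y.
Proof.
move=> Gg /and3P[pg qg rg] Gx Gy; apply: (@dist_le_trans _ _ 1 1 _ g).
  by apply: dist_le1_cover; rewrite //= pg qg rg !orbT.
by apply: dist_le1_cover; rewrite //= pg qg rg.
Qed.

Lemma GammaV1_pqr_elt : 1 \in GammaV G ->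
  exists2 g, g \in G & [&& p %| #[g], q %| #[g] & r %| #[g]].
Proof.
case/GammaV_neighbour=> g Gg; rewrite tadj_gen2_dvd3 // => /andP[_ dvd_g].
exists g => //; move: dvd_g; rewrite /gen2_dvd3.
have dvd k : k %| #|<<[set 1; g]>>| -> k %| #[g].
  by move/dvdn_trans; apply; rewrite orderE cardSg ?gen2_subG ?group1 ?cycle_id.
by case/and3P=> /dvd-> /dvd-> /dvd->.
Qed.

Lemma triangle_dist_le3 x y : pi_edgeb G p q -> pi_edgeb G q r -> pi_edgeb G p r ->
  x \in GammaV G -> y \in GammaV G -> dist_le G 3 x y.
Proof.
move=> /exists_inP[a Ga /andP[pa qa]] /exists_inP[b Gb /andP[qb rb]].
move=> /exists_inP[c Gc /andP[pc rc]] Vx Vy.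
have GV z : z \in GammaV G -> z \in G := subsetP (GammaV_sub G) z.
have [V1 | V'1] := boolP (1 \in GammaV G).
  have [g Gg pqr_g] := GammaV1_pqr_elt V1.
  exact: dist_leW _ (pqr_elt_dist_le2 Gg pqr_g (GV x Vx) (GV y Vy)).
have Ghub h : h \in [:: a; b; c] -> h \in G by rewrite !inE => /or3P[]/eqP->.
have near_hub z : z \in GammaV G -> exists2 h, h \in [:: a; b; c] & dist_le G 1 z h.
  move=> Vz; have ntz : z != 1 by apply: contraNneq V'1 => <-.
  have kz := pdiv_dvd #[z]; have k_pr : prime (pdiv #[z]) by rewrite pdiv_prime ?order_gt1.
  have : pdiv #[z] \in [:: p; q; r].
    by rewrite mem_primesG k_pr (dvdn_trans kz) ?order_dvdG ?GV.
  have near h : h \in [:: a; b; c] -> all (fun k => (k %| #[z]) || (k %| #[h])) [:: p; q; r] ->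
      exists2 h, h \in [:: a; b; c] & dist_le G 1 z h.
    by move=> hub_h cover; exists h; last exact: dist_le1_cover (GV z Vz) (Ghub h hub_h) cover.
  rewrite !inE => /or3P[]/eqP ek; rewrite ek in kz;
    [apply: (near b) | apply: (near c) | apply: (near a)];
  by rewrite ?inE ?eqxx ?orbT //= kz ?pa ?qa ?qb ?rb ?pc ?rc ?orbT.
have hub_adj h1 h2 : h1 \in [:: a; b; c] -> h2 \in [:: a; b; c] -> dist_le G 1 h1 h2.
  move=> hub1 hub2; have [-> | neq_h12] := eqVneq h1 h2; first exact: dist_le_refl.
  apply: dist_le1_cover; rewrite ?Ghub //.
  move: hub1 hub2 neq_h12; rewrite !inE => /or3P[]/eqP-> /or3P[]/eqP->;
  by rewrite ?eqxx //= ?pa ?qa ?qb ?rb ?pc ?rc ?orbT.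
have [h1 hub1 xh1] := near_hub x Vx; have [h2 hub2 yh2] := near_hub y Vy.
apply: (dist_le_trans xh1); apply: (@dist_le_trans _ _ 1 1 _ h2); first exact: hub_adj.
exact: dist_le_sym.
Qed.

Section IsolatedPrime.
Hypotheses (solG : solvable G) (r'p : ~~ pi_edgeb G r p) (r'q : ~~ pi_edgeb G r q).

Let isoG : prime_isolated r G.
Proof.
move=> x Gx rx; apply/pnatP=> [|k k_pr kx]; first exact: order_gt0.
have : k \in [:: p; q; r] by rewrite mem_primesG k_pr (dvdn_trans kx) ?order_dvdG.
rewrite !inE => /or3P[]/eqP ek //; subst k.
  by case/negP: r'p; apply/exists_inP; exists x; rewrite ?rx.
by case/negP: r'q; apply/exists_inP; exists x; rewrite ?rx.
Qed.

Lemma not_hub_pelt x : x \in G -> ~~ hub p q r x -> p.-elt x || q.-elt x.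
Proof.
move=> Gx; rewrite /hub negb_or => /andP[not_r_hub not_pq].
have r'x : ~~ (r %| #[x]).
  by apply: contra not_r_hub => rx; rewrite isoG ?(prime_dvd_order_neq1 r_pr rx).
have pi_x k : prime k -> k %| #[x] -> (k == p) || (k == q).
  move=> k_pr kx; have : k \in [:: p; q; r] by rewrite mem_primesG k_pr (dvdn_trans kx) ?order_dvdG.
  rewrite !inE => /or3P[-> // | -> | /eqP ek]; first by rewrite orbT.
  by rewrite -ek kx in r'x.
have [px | p'x] := boolP (p %| #[x]); apply/orP; [left | right];
  apply/pnatP=> [|k k_pr kx]; rewrite ?order_gt0 // inE;
  case/orP: (pi_x k k_pr kx) => // /eqP ek; subst k.
  by rewrite px kx in not_pq.
by rewrite kx in p'x.
Qed.

Lemma hub_dist_le2 h1 h2 : h1 \in G -> h2 \in G -> hub p q r h1 -> hub p q r h2 ->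
  dist_le G 2 h1 h2.
Proof.
have [neq_pq neq_qr neq_pr] := pqr_neq.
have [c Gc pqc] := prime_isolated_edge p_pr q_pr r_pr neq_pq neq_qr neq_pr solG piG pG qG rG isoG.
have [y Gy oy] := Cauchy r_pr rG.
have adj h h' : h \in G -> h' \in G -> r %| #[h] -> (p %| #[h']) && (q %| #[h']) ->
    dist_le G 1 h h'.
  by move=> Gh Gh' rh /andP[ph' qh']; apply: dist_le1_cover; rewrite //= ph' qh' rh !orbT.
have r_hub h : r.-elt h && (h != 1) -> r %| #[h] by case/andP; apply: order_dvd_pelt.
have ry : r %| #[y] by rewrite oy.
move=> Gh1 Gh2 /orP[/r_hub r1 | pq1] /orP[/r_hub r2 | pq2].
- by apply: (@dist_le_trans _ _ 1 1 _ c); [apply: adj | apply/dist_le_sym/adj].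
- exact: dist_leW (adj _ _ Gh1 Gh2 r1 pq2).
- exact: dist_leW (dist_le_sym (adj _ _ Gh2 Gh1 r2 pq1)).
by apply: (@dist_le_trans _ _ 1 1 _ y); [apply/dist_le_sym/adj | apply: adj].
Qed.

Lemma GammaV_dist_le1_hub x : x \in GammaV G ->
  exists h, [/\ h \in G, hub p q r h & dist_le G 1 x h].
Proof.
move=> Vx; have Gx := subsetP (GammaV_sub G) x Vx.
have [hub_x | not_hub_x] := boolP (hub p q r x); first by exists x; split=> //; apply: dist_le_refl.
have [w Gw] := GammaV_neighbour Vx; rewrite tadj_gen2_dvd3 // => /andP[_ /and3P[pX qX rX]].
have sXG := gen2_subG Gx Gw; have solX := solvableS sXG solG; have piX := pgroupS sXG piG.
have isoX : prime_isolated r <<[set x; w]>> by move=> z Xz; apply: isoG (subsetP sXG z Xz).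
have [neq_pq neq_qr neq_pr] := pqr_neq; have neq_qp : q != p by rewrite eq_sym.
have [h Xh /andP[hub_h dvd_h]] :
    exists2 h, h \in <<[set x; w]>> & hub p q r h && gen2_dvd3 p q r x h.
  case/orP: (not_hub_pelt Gx not_hub_x) => [p_x | q_x].
    exact: (exists_hub_gen2 p_pr q_pr r_pr neq_pq neq_qr neq_pr (H := <<[set x; w]>>%G)
      (erefl _) solX piX pX qX rX isoX p_x).
  have piX' : [pred k | k \in [:: q; p; r]].-group <<[set x; w]>>.
    by apply: sub_pgroup piX => k; rewrite !inE => /or3P[]->; rewrite ?orbT.
  have [h Xh] := exists_hub_gen2 q_pr p_pr r_pr neq_qp neq_pr neq_qr (H := <<[set x; w]>>%G)
    (erefl _) solX piX' qX pX rX isoX q_x.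
  by rewrite hubC /gen2_dvd3 => /and4P[hub_h qX' pX' rX']; exists h; rewrite // hub_h pX' qX' rX'.
have Gh := subsetP sXG h Xh.
by exists h; split=> //; apply: dist_le1_gen2.
Qed.

Lemma isolated_prime_dist_le4 x y : x \in GammaV G -> y \in GammaV G -> dist_le G 4 x y.
Proof.
move=> Vx Vy; have [h1 [Gh1 hub1 xh1]] := GammaV_dist_le1_hub Vx.
have [h2 [Gh2 hub2 yh2]] := GammaV_dist_le1_hub Vy.
apply: (dist_le_trans xh1); apply: (@dist_le_trans _ _ 2 1 _ h2).
  exact: hub_dist_le2.
exact: dist_le_sym.
Qed.
End IsolatedPrime.
End ThreePrimes.

(** * Edges of the prime graph *)

Lemma order_expn_divn (gT : finGroupType) (x : gT) (n : nat) :
  n %| #[x] -> #[x ^+ (#[x] %/ n)] = n.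
Proof.
move=> nx; have n_gt0 : 0 < n by exact: dvdn_gt0 (order_gt0 x) nx.
have k_gt0 : 0 < #[x] %/ n by rewrite divn_gt0 // dvdn_leq.
rewrite orderXdiv; last by rewrite -{2}(divnK nx) dvdn_mulr.
by rewrite -{1}(divnK nx) mulKn.
Qed.

Section PrimeGraph.
Variables (gT : finGroupType) (G : {group gT}).

Lemma pi_edgeP (a b : nat) : a \in primes #|G| -> b \in primes #|G| -> a != b ->
  reflect (pi_edge G a b) (pi_edgeb G a b).
Proof.
move=> aG bG neq_ab; apply: (iffP exists_inP) => [[g Gg /andP[ag bg]] | [_ _ _ [g Gg og]]].
  split=> //; exists (g ^+ (#[g] %/ (a * b))); rewrite ?groupX // order_expn_divn //.
  move: aG bG; rewrite !mem_primes => /andP[a_pr _] /andP[b_pr _].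
  by rewrite Gauss_dvd ?ag ?bg // prime_coprime // dvdn_prime2.
by exists g; rewrite // og dvdn_mulr ?dvdn_mull.
Qed.

Definition prime_graph_path3 (p q r : nat) :=
  [/\ perm_eq (primes #|G|) [:: p; q; r],
      pi_edge G p r, pi_edge G r q, ~ pi_edge G p q &
      forall a b, pi_edge G a b ->
        [\/ (a = p /\ b = r), (a = r /\ b = p), (a = r /\ b = q) | (a = q /\ b = r)]].

Lemma prime_graph_path3P (p q r : nat) : perm_eq (primes #|G|) [:: p; q; r] ->
  pi_edgeb G p r -> pi_edgeb G r q -> ~~ pi_edgeb G p q -> prime_graph_path3 p q r.
Proof.
move=> primesG e_pr e_rq n_pq.
have memG k : (k \in primes #|G|) = (k \in [:: p; q; r]) := perm_mem primesG k.
have [neq_pq neq_qr neq_pr] : [/\ p != q, q != r & p != r].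
  move: (primes_uniq #|G|); rewrite (perm_uniq primesG) /= !inE !negb_or.
  by case/and3P=> /andP[-> ->] ->.
have edgeP a b : a \in [:: p; q; r] -> b \in [:: p; q; r] -> a != b ->
    reflect (pi_edge G a b) (pi_edgeb G a b).
  by rewrite -!memG; apply: pi_edgeP.
split=> //.
- by apply/edgeP; rewrite ?inE ?eqxx ?orbT.
- by apply/edgeP; rewrite ?inE ?eqxx ?orbT // eq_sym.
- by move=> e; case/negP: n_pq; apply/edgeP; rewrite ?inE ?eqxx ?orbT.
move=> a b e_ab; have [aG bG neq_ab _] := e_ab.
have {e_ab} := introT (pi_edgeP aG bG neq_ab) e_ab.
move: aG bG neq_ab; rewrite !memG !inE => /or3P[]/eqP-> /or3P[]/eqP->; rewrite ?eqxx // => _.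
- by rewrite (negPf n_pq).
- by constructor 1.
- by rewrite pi_edgebC (negPf n_pq).
- by constructor 4.
- by constructor 2.
- by constructor 3.
Qed.
End PrimeGraph.

Lemma prime_graph_cases (gT : finGroupType) (G : {group gT}) (p q r : nat) :
    perm_eq (primes #|G|) [:: p; q; r] ->
  [\/ [&& pi_edgeb G p q, pi_edgeb G q r & pi_edgeb G p r],
      exists a b c, [/\ perm_eq (primes #|G|) [:: a; b; c],
                        ~~ pi_edgeb G c a & ~~ pi_edgeb G c b] |
      exists a b c, prime_graph_path3 G a b c].
Proof.
move=> primesG.
have primes_qrp : perm_eq (primes #|G|) [:: q; r; p].
  exact: perm_trans primesG (permEl (perm_catC [:: p] [:: q; r])).
have primes_prq : perm_eq (primes #|G|) [:: p; r; q].
  by apply: perm_trans primesG _; rewrite perm_cons (permEl (perm_catC [:: q] [:: r])).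
case e_pq: (pi_edgeb G p q); case e_qr: (pi_edgeb G q r); case e_pr: (pi_edgeb G p r).
- by constructor 1.
- by constructor 3; exists p, r, q; apply: prime_graph_path3P; rewrite ?e_pq ?e_qr ?e_pr.
- constructor 3; exists q, r, p; apply: prime_graph_path3P; rewrite ?e_qr ?e_pr //.
  by rewrite pi_edgebC.
- by constructor 2; exists p, q, r; rewrite !(pi_edgebC G r) e_pr e_qr.
- constructor 3; exists p, q, r; apply: prime_graph_path3P; rewrite ?e_pq ?e_pr //.
  by rewrite pi_edgebC.
- by constructor 2; exists q, r, p; rewrite e_pq e_pr.
- by constructor 2; exists p, r, q; rewrite pi_edgebC e_pq e_qr.
by constructor 2; exists p, q, r; rewrite !(pi_edgebC G r) e_pr e_qr.
Qed.

Theorem lemma2p8 (gT : finGroupType) (G : {group gT}) :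
  solvable G ->
  isolated G != G ->
  size (primes #|G|) = 3 ->
  diam_gt G 4 ->
  exists p q r : nat,
    [/\ perm_eq (primes #|G|) [:: p; q; r],
        pi_edge G p r, pi_edge G r q, ~ pi_edge G p q &
        forall a b, pi_edge G a b ->
          [\/ (a = p /\ b = r), (a = r /\ b = p), (a = r /\ b = q) | (a = q /\ b = r)]].
Proof.
(* [isolated G != G] follows from [diam_gt G 4]. *)
move=> solG _ size3 [x [y [Vx [Vy far_xy]]]].
have [p [q [r primesG]]] : exists p q r, perm_eq (primes #|G|) [:: p; q; r].
  by case: (primes _) size3 => [|p [|q [|r []]]] // _; exists p, q, r.
case: (prime_graph_cases primesG) => [/and3P[e_pq e_qr e_pr] | [a [b [c [primesG' c'a c'b]]]] | ].
- by case: far_xy; apply: dist_leW (triangle_dist_le3 primesG e_pq e_qr e_pr Vx Vy).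
- by case: far_xy; exact: (isolated_prime_dist_le4 primesG' solG c'a c'b Vx Vy).
by case=> a [b [c path_abc]]; exists a, b, c.
Qed.
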